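(* Let $p$ be a prime, $m,t\ge 1$, $B=\mathrm{GF}(p^m)$ and $F=\mathrm{GF}(p^{mt})$, and assume that $t$ is divisible by $p$ (the characteristic of $F$). Let $n=|F|=|B|^t$, $k=n(1-1/|B|)$, and let $\mathcal{C}=\mathrm{RS}(F,k)=\{(f(\alpha))_{\alpha\in F} : f\in F[x],\ \deg f\le k-1\}$, where the symbol $f(\alpha)$ is stored at the node indexed by $\alpha$. Let $K=\ker(\mathrm{Tr}_{F/B})=\{\kappa\in F:\mathrm{Tr}_{F/B}(\kappa)=0\}$. Suppose $f(\alpha^* )$, $f(\overline{\alpha})$, $f(\alpha')$ are three erased symbols, with $\alpha^*,\overline{\alpha},\alpha'$ distinct, such that $$\left\{\frac{\overline{\alpha}-\alpha^*}{\overline{\alpha}-\alpha'},\ \frac{\alpha'-\overline{\alpha}}{\alpha'-\alpha^*},\ \frac{\alpha^*-\alpha'}{\alpha^*-\overline{\alpha}}\right\}\cap K\neq\varnothing.$$ Then there exists a centralized repair scheme that recovers the three erased symbols by downloading three sub-symbols (elements of $B$) from each of the $n-3$ surviving nodes, each computed from that node's stored symbol; i.e., the repair bandwidth is $3(n-3)$ sub-symbols.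
   Context: Elements of $F$ are called symbols and elements of $B$ sub-symbols. The trace is $\mathrm{Tr}_{F/B}(x)=\sum_{i=0}^{t-1}x^{|B|^i}$. In centralized repair, a single repair center downloads data from the surviving nodes and computes all erased symbols; the repair bandwidth is the total number of sub-symbols downloaded. *)

From HB Require Import structures.
From mathcomp Require Import all_boot all_order all_algebra all_field.
Set Implicit Arguments. Unset Strict Implicit. Unset Printing Implicit Defensive.
Import GRing.Theory.
Local Open Scope ring_scope.

(* F : a finite field of order q^t; the base field B = GF(q) is realized as the
   unique subfield of F of order q, namely the fixed points of x |-> x^q. *)
Definition in_base (F : finFieldType) (q : nat) (x : F) : bool := x ^+ q == x.

Definition trace_FB (F : finFieldType) (q t : nat) (x : F) : F :=
  \sum_(i < t) x ^+ (q ^ i).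

(* A centralized repair scheme for RS(F,k) (evaluation at all of F, the symbol
   f(a) stored at node a) recovering the erased symbols indexed by E, which
   downloads exactly b sub-symbols (elements of B) from each surviving node,
   each computed from that node's stored symbol alone.
   g a j : F -> F is the j-th download function of node a (values in B);
   rec is the repair center's computation; it only sees downloads of the
   surviving nodes (erased nodes are masked to 0).  Bandwidth = b*(n - |E|). *)
Definition centralized_repair_scheme (F : finFieldType) (q k : nat)
    (E : {set F}) (b : nat) : Prop :=
  exists (g : F -> 'I_b -> F -> F) (rec : (F -> 'I_b -> F) -> F -> F),
    (forall a j x, in_base q (g a j x)) /\
    (forall f : {poly F}, (size f <= k)%N ->
       forall e, e \in E ->
         rec (fun a j => if a \in E then 0 else g a j f.[a]) e = f.[e]).

(* Node x sends Tr (f(x) / (x - e)) for each erased e.  Every polynomial of degree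
   < |F| / q, in particular Σ_i z^(q^i) (X - e)^(q^i - 1), is orthogonal to RS(F, k);
   taking traces yields h(e) = Σ_(x != e) Tr (h(x) / (x - e)) (e - x) for each codeword h.
   For the difference h of two codewords with the same downloads, each h(e_i) is then a
   B-combination of the six unknowns c_ij = Tr (h(e_j) / (e_j - e_i)); as Tr 1 = t = 0,
   they satisfy c_ij = c_jk Tr ((e_j - e_k) / (e_j - e_i)) around both 3-cycles, so a
   trace-zero ratio forces all c_ij, hence h(e_1), h(e_2), h(e_3), to vanish. *)

From HB Require Import structures.
From mathcomp Require Import all_boot all_order all_algebra all_field.
From mathcomp Require Import cyclic zify ring.
Import GRing.Theory FinRing.Theory.
Local Open Scope ring_scope.

Set Implicit Arguments. Unset Strict Implicit. Unset Printing Implicit Defensive.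

Section FinFieldSums.

Variable F : finFieldType.

Lemma natr_card_finField : #|F|%:R = 0 :> F.
Proof.
rewrite -cardsT -zmodXgE.
by rewrite (expg_cardG (G := fingroup.setT_group (FinRing.Zmodule_to_finGroup F))) ?inE.
Qed.

Lemma sum_expr_finField j : (j < #|F|.-1)%N -> \sum_(x : F) x ^+ j = 0.
Proof.
case: j => [_ | j lt_j_card].
  by rewrite (eq_bigr (fun _ => 1)) => [|x _]; rewrite ?sumr_const ?natr_card_finField.
have /existsP[a /andP[a_neq0 aj_neq1]] : [exists a : F, (a != 0) && (a ^+ j.+1 != 1)].
  apply: contraT; rewrite negb_exists => /forallP aj1.
  have roots_nonzero : all (root ('X^(j.+1) - 1%:P)) (enum (predC1 (0 : F))).
    apply/allP => x; rewrite mem_enum inE => x_neq0.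
    by have := aj1 x; rewrite x_neq0 negbK rootE !hornerE => /eqP ->; rewrite subrr.
  have := roots_geq_poly_eq0 roots_nonzero (enum_uniq _).
  rewrite -cardE cardC1 size_XnsubC // => /(_ lt_j_card) /eqP.
  by rewrite -size_poly_eq0 size_XnsubC.
have dilate : \sum_(x : F) x ^+ j.+1 = a ^+ j.+1 * \sum_(x : F) x ^+ j.+1.
  rewrite mulr_sumr (reindex_inj (mulfI a_neq0)) /=.
  by apply: eq_bigr => x _; rewrite exprMn.
apply/eqP; move/eqP: dilate; rewrite -subr_eq0 -{1}[\sum_x _]mul1r -mulrBl mulf_eq0.
by rewrite subr_eq0 eq_sym (negPf aj_neq1).
Qed.

Lemma sum_horner_finField (P : {poly F}) : (size P < #|F|)%N -> \sum_(x : F) P.[x] = 0.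
Proof.
move=> size_P; under eq_bigr do rewrite horner_coef.
rewrite exchange_big big1 // => i _.
rewrite -mulr_sumr sum_expr_finField ?mulr0 //.
by rewrite -ltnS prednK ?(leq_ltn_trans _ size_P).
Qed.

End FinFieldSums.

Lemma cyclic_relations_eq0 (R : comPzRingType) (x y z a b c : R) :
  a * b * c = 0 -> x = y * a -> y = z * b -> z = x * c -> [/\ x = 0, y = 0 & z = 0].
Proof.
move=> abc0 xya yzb zxc.
have : x = x * (a * b * c) by rewrite {1}xya yzb zxc; ring.
rewrite abc0 mulr0 => x0.
have z0 : z = 0 by rewrite zxc x0 mul0r.
by split; rewrite // yzb z0 mul0r.
Qed.

Section Trace.

Variables (F : finFieldType) (q t : nat).
Hypotheses (pcharq : [pchar F].-nat q) (q_gt1 : (1 < q)%N) (t_gt0 : (0 < t)%N).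
Hypothesis cardF : #|F| = (q ^ t)%N.

Local Notation Tr := (trace_FB q t).

Lemma in_base_expn (b : F) i : in_base q b -> b ^+ (q ^ i) = b.
Proof. by move/eqP=> bq; elim: i => [|i IHi]; rewrite ?expr1 // expnS exprM bq. Qed.

Lemma trace_FBD (x y : F) : Tr (x + y) = Tr x + Tr y.
Proof.
rewrite /trace_FB -big_split; apply: eq_bigr => i _.
by apply: exprDn_pchar; rewrite pnatX pcharq.
Qed.

Lemma trace_FB0 : Tr 0 = 0 :> F.
Proof. by rewrite /trace_FB big1 // => i _; rewrite expr0n expn_eq0 gtn_eqF ?(ltnW q_gt1). Qed.

Lemma trace_FBB (x y : F) : Tr (x - y) = Tr x - Tr y.
Proof. by apply/eqP; rewrite eq_sym subr_eq -trace_FBD subrK. Qed.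

Lemma trace_FB_sum (I : Type) (r : seq I) (P : pred I) (f : I -> F) :
  Tr (\sum_(i <- r | P i) f i) = \sum_(i <- r | P i) Tr (f i).
Proof. by apply: big_morph; [exact: trace_FBD | exact: trace_FB0]. Qed.

Lemma trace_FB1 : Tr 1 = t%:R :> F.
Proof.
by rewrite /trace_FB (eq_bigr (fun _ => 1)) => [|i _]; rewrite ?sumr_const ?card_ord ?expr1n.
Qed.

Lemma trace_FB_scale (b x : F) : in_base q b -> Tr (b * x) = b * Tr x.
Proof.
move=> Bb; rewrite /trace_FB mulr_sumr; apply: eq_bigr => i _.
by rewrite exprMn (in_base_expn _ Bb).
Qed.

Lemma trace_FB_in_base (x : F) : in_base q (Tr x).
Proof.
have frobD : {morph (fun y : F => y ^+ q) : a b / a + b}.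
  by move=> a b; apply: exprDn_pchar.
have frob0 : (0 : F) ^+ q = 0 by rewrite expr0n gtn_eqF ?(ltnW q_gt1).
apply/eqP; rewrite /trace_FB (big_morph _ frobD frob0).
case: t t_gt0 cardF => // t' _ cardF'.
rewrite big_ord_recr big_ord_recl /= addrC; congr (_ + _).
  by rewrite -exprM -expnSr -cardF' expf_card expn0 expr1.
by apply: eq_bigr => i _; rewrite -exprM -expnSr.
Qed.

Lemma trace_FB_mul_trace (x y : F) : Tr (Tr x * y) = Tr x * Tr y.
Proof. exact/trace_FB_scale/trace_FB_in_base. Qed.

(* Tr is a nonzero polynomial function of degree q^(t-1) < |F|. *)
Lemma trace_FB_nondegenerate (y : F) : (forall z, Tr (z * y) = 0) -> y = 0.
Proof.
move=> trace_y0; apply: contraTeq isT => y_neq0.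
pose T : {poly F} := \sum_(i < t) 'X^(q ^ i).
have rootsT : all (root T) (enum F).
  apply/allP => z _; rewrite /root /T horner_sum.
  apply/eqP; rewrite -[RHS](trace_y0 (z / y)) divfK //.
  by apply: eq_bigr => i _; rewrite hornerXn.
have sizeT : (size T <= size (enum F))%N.
  rewrite -cardE cardF; apply: leq_trans (size_sum _ _ _) _.
  by apply/bigmax_leqP => i _; rewrite size_polyXn ltn_exp2l.
have coefT1 : T`_1 = 1.
  rewrite /T coef_sum; case: t t_gt0 => // t' _.
  rewrite big_ord_recl /= coefXn expn0 eqxx big1 ?addr0 // => i _.
  by rewrite coefXn eq_sym gtn_eqF // -[1%N](expn0 q) ltn_exp2l.
move: coefT1; rewrite (roots_geq_poly_eq0 rootsT (enum_uniq _) sizeT) coef0 => /eqP.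
by rewrite eq_sym oner_eq0.
Qed.

Definition trace_quotient_poly (e z : F) : {poly F} :=
  \sum_(i < t) z ^+ (q ^ i) *: ('X - e%:P) ^+ (q ^ i).-1.

Lemma size_trace_quotient_poly e z : (size (trace_quotient_poly e z) <= #|F| %/ q)%N.
Proof.
have q_gt0 : (0 < q)%N := ltnW q_gt1.
rewrite /trace_quotient_poly cardF; case: t t_gt0 => // t' _; rewrite expnS mulKn //.
apply: leq_trans (size_sum _ _ _) _; apply/bigmax_leqP => i _.
apply: leq_trans (size_scale_leq _ _) _.
by rewrite size_exp_XsubC prednK ?expn_gt0 ?q_gt0 // leq_pexp2l // -ltnS.
Qed.

Lemma trace_quotient_poly_at e z : (trace_quotient_poly e z).[e] = z.
Proof.
rewrite horner_sum; case: t t_gt0 => // t' _.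
rewrite big_ord_recl big1 => [|i _]; rewrite hornerZ horner_exp hornerXsubC subrr.
  by rewrite expn0 expr1 expr0 mulr1 addr0.
by rewrite expr0n -subn1 subn_eq0 leqNgt -[1%N](expn0 q) ltn_exp2l // mulr0.
Qed.

Lemma trace_quotient_poly_off e z x :
  x != e -> (trace_quotient_poly e z).[x] = Tr (z * (x - e)) / (x - e).
Proof.
rewrite -subr_eq0 => xe_neq0.
rewrite horner_sum /trace_FB mulr_suml; apply: eq_bigr => i _.
rewrite hornerZ horner_exp hornerXsubC exprMn -mulrA; congr (_ * _).
apply: (mulIf xe_neq0); rewrite divfK // -exprSr prednK //.
by rewrite expn_gt0 ltnW.
Qed.

(* Tr (z * (lhs - rhs)) is the trace of the sum over F of h * trace_quotient_poly e z,
   which vanishes because this polynomial has degree < |F| - 1. *)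
Lemma horner_trace_expansion (h : {poly F}) e :
  (size h <= #|F| - #|F| %/ q)%N ->
  h.[e] = \sum_(x | x != e) Tr (h.[x] / (x - e)) * (e - x).
Proof.
move=> size_h.
have expansion0 : h.[e] + \sum_(x | x != e) Tr (h.[x] / (x - e)) * (x - e) = 0.
  apply: trace_FB_nondegenerate => z.
  pose g := trace_quotient_poly e z.
  have size_hg : (size (h * g)%R < #|F|)%N.
    have := size_trace_quotient_poly e z; have := leq_div #|F| q.
    have := size_polyMleq h g; have : (0 < #|F|)%N by rewrite cardF expn_gt0 ltnW.
    rewrite -/g; lia.
  have sum_hg : \sum_x Tr ((h * g).[x]) = 0.
    by rewrite -trace_FB_sum sum_horner_finField ?trace_FB0.
  rewrite -[RHS]sum_hg [RHS](bigD1 e) //= hornerM trace_quotient_poly_at.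
  rewrite mulrDr mulr_sumr trace_FBD trace_FB_sum mulrC; congr (_ + _).
  apply: eq_bigr => x x_neq_e.
  by rewrite hornerM trace_quotient_poly_off // mulrCA [in RHS]mulrCA !trace_FB_mul_trace mulrC.
move/eqP: expansion0; rewrite addr_eq0 => /eqP ->.
by rewrite -sumrN; apply: eq_bigr => x _; rewrite -mulrN opprB.
Qed.

Hypothesis natr_t_eq0 : t%:R = 0 :> F.

Lemma trace_FB_ratio_swap (i j k : F) :
  i != j -> Tr ((j - k) / (j - i)) = - Tr ((i - k) / (i - j)).
Proof.
rewrite -subr_eq0 => ij_neq0; apply/eqP; rewrite -addr_eq0 -trace_FBD.
have ji_neq0 : j - i != 0 by rewrite -opprB oppr_eq0.
have -> : (j - k) / (j - i) + (i - k) / (i - j) = 1.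
  by field; rewrite ij_neq0 ji_neq0.
by rewrite trace_FB1 natr_t_eq0.
Qed.

Variable h : {poly F}.
Hypothesis size_h : (size h <= #|F| - #|F| %/ q)%N.

(* With h = f - f', the difference of the sub-symbols that node x sends for the erased node a. *)
Local Notation download a x := (Tr (h.[x] / (x - a))).

Lemma horner_three_erasures e u v : e != u -> e != v -> u != v ->
    (forall x, x != e -> x != u -> x != v -> download e x = 0) ->
  h.[e] = download e u * (e - u) + download e v * (e - v).
Proof.
move=> eu ev uv vanish; rewrite [LHS]horner_trace_expansion //.
rewrite (bigD1 u) 1?eq_sym //= (bigD1 v) /=; last by rewrite eq_sym ev eq_sym uv.
by rewrite big1 ?addr0 // => x /andP[/andP[xe xu] xv]; rewrite vanish ?mul0r.
Qed.

Lemma download_relation a b w : a != b -> b != w -> a != w ->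
    (forall x, x != a -> x != b -> x != w -> download b x = 0) ->
  download a b = download b w * Tr ((b - w) / (b - a)).
Proof.
move=> ab bw aw vanish; have ba : b != a by rewrite eq_sym.
have ba_neq0 : b - a != 0 by rewrite subr_eq0.
rewrite (horner_three_erasures ba bw aw) => [|x *]; last exact: vanish.
rewrite mulrDl mulfK // -mulrA trace_FBD -[X in Tr X + _]mulr1.
by rewrite !trace_FB_mul_trace trace_FB1 natr_t_eq0 mulr0 add0r.
Qed.

Section Cycle.

Variables e1 e2 e3 : F.
Hypotheses (e12 : e1 != e2) (e13 : e1 != e3) (e23 : e2 != e3).
Hypothesis vanish : forall x, x != e1 -> x != e2 -> x != e3 ->
  forall e, e \in [:: e1; e2; e3] -> download e x = 0.

Lemma downloads_cycle_eq0 :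
    Tr ((e3 - e2) / (e3 - e1)) * Tr ((e2 - e1) / (e2 - e3)) * Tr ((e1 - e3) / (e1 - e2)) = 0 ->
  [/\ download e1 e3 = 0, download e3 e2 = 0 & download e2 e1 = 0].
Proof.
move/cyclic_relations_eq0; apply; apply: download_relation => [||| x *]; try by rewrite // eq_sym.
all: by apply: vanish => //; rewrite !inE eqxx ?orbT.
Qed.

End Cycle.

Lemma three_erasures_vanish e1 e2 e3 : e1 != e2 -> e1 != e3 -> e2 != e3 ->
    (forall x, x != e1 -> x != e2 -> x != e3 ->
       forall e, e \in [:: e1; e2; e3] -> download e x = 0) ->
    Tr ((e2 - e1) / (e2 - e3)) = 0 \/ Tr ((e3 - e2) / (e3 - e1)) = 0 \/
      Tr ((e1 - e3) / (e1 - e2)) = 0 ->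
  [/\ h.[e1] = 0, h.[e2] = 0 & h.[e3] = 0].
Proof.
move=> e12 e13 e23 vanish ratio0.
have e32 : e3 != e2 by rewrite eq_sym.
have e31 : e3 != e1 by rewrite eq_sym.
set a := Tr ((e1 - e3) / (e1 - e2)) in ratio0; set b := Tr ((e2 - e1) / (e2 - e3)) in ratio0.
set c := Tr ((e3 - e2) / (e3 - e1)) in ratio0.
have cycle0 : c * b * a = 0 by case: ratio0 => [->|[->|->]]; rewrite ?mulr0 ?mul0r.
have [d13 d32 d21] := downloads_cycle_eq0 e12 e13 e23 vanish cycle0.
have vanish' x : x != e1 -> x != e3 -> x != e2 ->
    forall e, e \in [:: e1; e3; e2] -> download e x = 0.
  by move=> x1 x3 x2 e; rewrite !inE => /or3P[]/eqP->; apply: vanish; rewrite ?inE ?eqxx ?orbT.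
have cycle0' : Tr ((e2 - e3) / (e2 - e1)) * Tr ((e3 - e1) / (e3 - e2)) *
    Tr ((e1 - e2) / (e1 - e3)) = 0.
  rewrite (trace_FB_ratio_swap _ e12) (trace_FB_ratio_swap _ e23) (trace_FB_ratio_swap _ e31).
  by apply/eqP; rewrite -/a -/b -/c mulrNN mulrN oppr_eq0 mulrC [a * b]mulrC mulrA cycle0.
have [d12 d23 d31] := downloads_cycle_eq0 e13 e12 e32 vanish' cycle0'.
have e21 : e2 != e1 by rewrite eq_sym.
split.
- rewrite (horner_three_erasures e12 e13 e23) ?d12 ?d13 ?mul0r ?addr0 // => x *.
  by apply: vanish; rewrite ?inE ?eqxx ?orbT.
- rewrite (horner_three_erasures e21 e23 e13) ?d21 ?d23 ?mul0r ?addr0 // => x *.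
  by apply: vanish; rewrite ?inE ?eqxx ?orbT.
- rewrite (horner_three_erasures e31 e32 e12) ?d31 ?d32 ?mul0r ?addr0 // => x *.
  by apply: vanish; rewrite ?inE ?eqxx ?orbT.
Qed.

End Trace.

Lemma centralized_repair_of_determining_downloads (F : finFieldType) q k
    (E : {set F}) b (g : F -> 'I_b -> F -> F) :
    (forall a j x, in_base q (g a j x)) ->
    (forall f f' : {poly F}, (size f <= k)%N -> (size f' <= k)%N ->
       (forall a j, a \notin E -> g a j f.[a] = g a j f'.[a]) ->
       forall e, e \in E -> f.[e] = f'.[e]) ->
  centralized_repair_scheme q k E b.
Proof.
move=> g_base determined.
pose masked (f : {poly F}) a j := if a \in E then 0 else g a j f.[a].
pose rec D e := if [pick f' : {poly_k F} | [forall a, forall j, D a j == masked f' a j]]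
  is Some f' then f'.[e] else 0.
exists g, rec; split=> // f size_f e eE; rewrite /rec; case: pickP => [f' | no_f'].
  move=> /forallP consistent; apply: determined => // a j aE.
  by have /forallP/(_ j)/eqP := consistent a; rewrite /masked (negPf aE).
have /forallP[] := negbT (no_f' (npolyp k f)).
by move=> a; apply/forallP => j; rewrite npolypK.
Qed.

Theorem theorem4 (p m t : nat) (F : finFieldType)
  (Hp : prime p) (Hm : (1 <= m)%N) (Ht : (1 <= t)%N) (Hpt : (p %| t)%N)
  (HF : #|F| = (p ^ (m * t))%N)
  (as_ ab a' : F)
  (Hd1 : as_ != ab) (Hd2 : as_ != a') (Hd3 : ab != a')
  (HK : trace_FB (p ^ m) t ((ab - as_) / (ab - a')) = 0 \/
        trace_FB (p ^ m) t ((a' - ab) / (a' - as_)) = 0 \/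
        trace_FB (p ^ m) t ((as_ - a') / (as_ - ab)) = 0) :
  centralized_repair_scheme (p ^ m) (#|F| - #|F| %/ p ^ m) [set as_; ab; a'] 3.
Proof.
have pcharFp : p \in [pchar F] := card_finPcharP HF Hp.
have pcharq : [pchar F].-nat (p ^ m)%N by rewrite pnatX (eq_pnat _ (pcharf_eq pcharFp)) pnat_id.
have cardF : #|F| = ((p ^ m) ^ t)%N by rewrite HF expnM.
have q_gt1 : (1 < p ^ m)%N by rewrite -[1%N](expn0 p) ltn_exp2l ?prime_gt1.
have natr_t_eq0 : t%:R = 0 :> F by apply/eqP; rewrite -(dvdn_pcharf pcharFp).
pose erased := [:: as_; ab; a'].
pose g a (j : 'I_3) x := trace_FB (p ^ m)%N t (x / (a - erased`_j)).
apply: (centralized_repair_of_determining_downloads (g := g)) => [a j x|f f' size_f size_f' same].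
  exact: trace_FB_in_base.
have size_ff' : (size (f - f')%R <= #|F| - #|F| %/ p ^ m)%N.
  by rewrite (leq_trans (size_polyD _ _)) // size_polyN geq_max size_f size_f'.
have [] := three_erasures_vanish pcharq q_gt1 Ht cardF natr_t_eq0 size_ff' Hd1 Hd2 Hd3 _ HK.
  move=> x x1 x2 x3 e e_erased.
  have xE : x \notin [set as_; ab; a'] by rewrite !inE (negPf x1) (negPf x2) (negPf x3).
  have j_lt : (index e erased < 3)%N by rewrite index_mem.
  have := same x (Ordinal j_lt) xE.
  by rewrite /g /= nth_index // hornerD hornerN mulrBl trace_FBB // => ->; rewrite subrr.
move=> h1 h2 h3 e; rewrite !inE => /orP[/orP[]|]/eqP->; apply/eqP.
all: by rewrite -subr_eq0 -hornerN -hornerD; apply/eqP.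
Qed.
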